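(* The logics $\mathsf{CTL}_\delta$ and $\mathsf{CTL}_\infty$ are equally expressive in the following sense: for every $\mathsf{CTL}_\infty$ formula $\varphi$ there is a $\mathsf{CTL}_\delta$ formula $\varphi'$ such that for every Kripke structure $K$ over $\mathbf{AP}$ and every state $s$ of $K$, $s\models\varphi$ in $K$ iff $s\models\varphi'$ in $D(K)$; and for every $\mathsf{CTL}_\delta$ formula $\varphi$ there is a $\mathsf{CTL}_\infty$ formula $\varphi'$ such that for every Kripke structure $K$ over $\mathbf{AP}$ and every state $s$ of $K$, $s\models\varphi$ in $D(K)$ iff $s\models\varphi'$ in $K$.
   Context: A Kripke structure is $K=(S,L,\to)$ with $L:S\to\mathcal{P}(\mathbf{AP})$ and $\to\subseteq S\times S$ (not necessarily total). Paths are finite sequences $s_0,\dots,s_n$ or infinite sequences $s_0,s_1,\dots$ with $s_k\to s_{k+1}$; a path is maximal if infinite or if its last state has no successor. The deadlock extension $D(K)$ adds a fresh state $s_\delta$ labelled $\{\delta\}$, where $\delta\notin\mathbf{AP}$ is a fresh atomic proposition, a transition $s_\delta\to s_\delta$, and a transition $u\to s_\delta$ from every state $u$ of $K$ without successors. $\mathsf{CTL}_\infty$ formulas: $\varphi::=p\mid\neg\varphi\mid\bigwedge\Phi'\mid\exists(\varphi\,\mathsf{U}\,\varphi)\mid\exists^\infty\mathsf{G}\varphi$ with $p\in\mathbf{AP}$, $\Phi'$ an arbitrary set. $\mathsf{CTL}_\delta$ formulas: $\varphi::=p\mid\neg\varphi\mid\bigwedge\Phi'\mid\exists(\varphi\,\mathsf{U}\,\varphi)\mid\exists\mathsf{G}\varphi$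 with $p\in\mathbf{AP}\cup\{\delta\}$. Semantics: $s\models p$ iff $p\in L(s)$; negation and conjunction as usual; $s\models\exists(\varphi\,\mathsf{U}\,\varphi')$ iff there is a finite path $s_0,\dots,s_k$ from $s$ with $s_k\models\varphi'$ and $s_i\models\varphi$ for all $i<k$; $s\models\exists\mathsf{G}\varphi$ iff some maximal path from $s$ has all its states satisfying $\varphi$; $s\models\exists^\infty\mathsf{G}\varphi$ iff some infinite path from $s$ has all its states satisfying $\varphi$. *)

From Stdlib Require Import Arith.

Set Implicit Arguments.

(* Kripke structure over atomic propositions AP with state type S;
   the transition relation need not be total. *)
Record kripke (AP S : Type) := Kripke {
  klab : S -> AP -> Prop;
  ktr  : S -> S -> Prop
}.

Arguments klab {AP S} _ _ _.
Arguments ktr {AP S} _ _ _.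

(* finite path s_0,...,s_k given by f (only f 0..k matter) *)
Definition fin_path {AP S} (K : kripke AP S) (f : nat -> S) (k : nat) : Prop :=
  forall i, i < k -> ktr K (f i) (f (Datatypes.S i)).

Definition inf_path {AP S} (K : kripke AP S) (f : nat -> S) : Prop :=
  forall i, ktr K (f i) (f (Datatypes.S i)).

Definition deadlock {AP S} (K : kripke AP S) (u : S) : Prop :=
  forall v, ~ ktr K u v.

(* CTL_infty: arbitrary (possibly infinite) conjunctions, represented by
   families indexed by an arbitrary type I. *)
Inductive ctl_inf (AP : Type) : Type :=
| IAtom : AP -> ctl_inf AP
| INeg  : ctl_inf AP -> ctl_inf AP
| IAnd  : forall I : Type, (I -> ctl_inf AP) -> ctl_inf AP
| IEU   : ctl_inf AP -> ctl_inf AP -> ctl_inf AP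
| IEinfG : ctl_inf AP -> ctl_inf AP.

(* CTL_delta: atoms from AP + {delta}; None encodes the fresh delta. *)
Inductive ctl_delta (AP : Type) : Type :=
| DAtom : option AP -> ctl_delta AP
| DNeg  : ctl_delta AP -> ctl_delta AP
| DAnd  : forall I : Type, (I -> ctl_delta AP) -> ctl_delta AP
| DEU   : ctl_delta AP -> ctl_delta AP -> ctl_delta AP
| DEG   : ctl_delta AP -> ctl_delta AP.

Fixpoint sat_inf {AP S} (K : kripke AP S) (s : S) (phi : ctl_inf AP) {struct phi} : Prop :=
  match phi with
  | IAtom p => klab K s p
  | INeg psi => ~ sat_inf K s psi
  | IAnd Phi => forall i, sat_inf K s (Phi i)
  | IEU psi1 psi2 =>
      exists (f : nat -> S) (k : nat), f 0 = s /\ fin_path K f k /\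
        sat_inf K (f k) psi2 /\ (forall i, i < k -> sat_inf K (f i) psi1)
  | IEinfG psi =>
      exists f : nat -> S, f 0 = s /\ inf_path K f /\ (forall i, sat_inf K (f i) psi)
  end.

(* K' is a Kripke structure over AP + {delta}. EG quantifies over maximal paths:
   infinite ones, or finite ones ending in a state without successor. *)
Fixpoint sat_delta {AP S} (K : kripke (option AP) S) (s : S) (phi : ctl_delta AP)
  {struct phi} : Prop :=
  match phi with
  | DAtom p => klab K s p
  | DNeg psi => ~ sat_delta K s psi
  | DAnd Phi => forall i, sat_delta K s (Phi i)
  | DEU psi1 psi2 =>
      exists (f : nat -> S) (k : nat), f 0 = s /\ fin_path K f k /\
        sat_delta K (f k) psi2 /\ (forall i, i < k -> sat_delta K (f i) psi1)
  | DEG psi =>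
      (exists f : nat -> S, f 0 = s /\ inf_path K f /\ (forall i, sat_delta K (f i) psi))
      \/
      (exists (f : nat -> S) (k : nat), f 0 = s /\ fin_path K f k /\ deadlock K (f k) /\
         (forall i, i <= k -> sat_delta K (f i) psi))
  end.

(* states: option S, None = s_delta; labels over option AP, None = delta. *)

Definition dext_lab {AP S} (K : kripke AP S) (s : option S) (p : option AP) : Prop :=
  match s, p with
  | Some u, Some a => klab K u a
  | Some _, None => False
  | None, Some _ => False
  | None, None => True
  end.

Definition dext_tr {AP S} (K : kripke AP S) (s t : option S) : Prop :=
  match s, t with
  | Some u, Some v => ktr K u v
  | Some u, None => deadlock K u
  | None, None => True
  | None, Some _ => False
  end.

Definition dext {AP S} (K : kripke AP S) : kripke (option AP) (option S) :=
  Kripke (dext_lab K) (dext_tr K).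

(* In D(K) every state has a successor, so the maximal paths of D(K) are its infinite ones,
   and a path of D(K) from a state of K either stays in K forever or leaves K exactly once,
   from a deadlock of K, and then loops in s_delta.  Hence CTL_infty is translated by guarding
   every path formula with "not delta".  Conversely, the truth value of a CTL_delta formula at
   s_delta is a constant proposition, and a path of D(K) that escapes to s_delta is a finite
   maximal path of K; the latter is expressible in CTL_infty: a c-path leads to a state v all
   of whose descendants satisfy c and from which there is no infinite path, and then (by
   dependent choice) some c-path from v ends in a deadlock. *)
From Stdlib Require Import Arith Lia Setoid Classical ClassicalEpsilon.

Set Implicit Arguments.

Section Paths.

Variables (AP St : Type) (K : kripke AP St).

Definition ex_max_fin_path (s : St) (P : St -> Prop) : Prop :=
  exists f k, f 0 = s /\ fin_path K f k /\ deadlock K (f k) /\ forall i, i <= k -> P (f i).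

Lemma fin_path_le f k m : fin_path K f k -> m <= k -> fin_path K f m.
Proof. intros Hf Hm i Hi; apply Hf; lia. Qed.

Lemma inf_path_fin f k : inf_path K f -> fin_path K f k.
Proof. intros Hf i _; apply Hf. Qed.

Definition path_app (f : nat -> St) (k : nat) (g : nat -> St) (i : nat) : St :=
  if i <=? k then f i else g (i - k).

Lemma path_app_l f k g i : i <= k -> path_app f k g i = f i.
Proof. intros Hi; unfold path_app; destruct (Nat.leb_spec i k); [reflexivity | lia]. Qed.

Lemma path_app_r f k g i : f k = g 0 -> k <= i -> path_app f k g i = g (i - k).
Proof.
  intros Hfg Hi; unfold path_app; destruct (Nat.leb_spec i k); [|reflexivity].
  replace i with k by lia; rewrite Nat.sub_diag; exact Hfg.
Qed.

Lemma fin_path_app f k g m :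
  fin_path K f k -> fin_path K g m -> f k = g 0 -> fin_path K (path_app f k g) (k + m).
Proof.
  intros Hf Hg Hfg i Hi; destruct (Nat.lt_ge_cases i k).
  - rewrite !path_app_l by lia; apply Hf; lia.
  - rewrite !path_app_r by (auto; lia).
    replace (S i - k) with (S (i - k)) by lia; apply Hg; lia.
Qed.

Definition edge (x y : St) (i : nat) : St := match i with 0 => x | _ => y end.

Lemma fin_path_snoc f k y :
  fin_path K f k -> ktr K (f k) y ->
  fin_path K (path_app f k (edge (f k) y)) (S k) /\ path_app f k (edge (f k) y) (S k) = y.
Proof.
  intros Hf Hy; rewrite <- Nat.add_1_r; split.
  - apply fin_path_app; [exact Hf | intros [|i] Hi; [exact Hy | lia] | reflexivity].
  - rewrite path_app_r by (reflexivity || lia); replace (k + 1 - k) with 1 by lia; reflexivity.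
Qed.

Lemma deadlock_path_of_no_inf_path v :
  ~ (exists f, f 0 = v /\ inf_path K f) ->
  exists f k, f 0 = v /\ fin_path K f k /\ deadlock K (f k).
Proof.
  intros Hno_inf; apply NNPP; intros Hno_dead.
  set (R x := exists f k, f 0 = v /\ fin_path K f k /\ f k = x).
  assert (Hsucc : forall x, R x -> exists y, ktr K x y /\ R y).
  { intros x (f & k & F0 & Fp & Fk); subst x.
    apply NNPP; intros Hstuck; apply Hno_dead; exists f, k; do 2 (split; [assumption|]).
    intros y Hy; apply Hstuck; exists y; split; [exact Hy|].
    destruct (fin_path_snoc y Fp Hy) as [Hp Hend].
    exists (path_app f k (edge (f k) y)), (S k); split; [|split; assumption].
    rewrite path_app_l by lia; exact F0. }
  set (next x := epsilon (inhabits v) (fun y => ktr K x y /\ R y)).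
  assert (Hnext : forall x, R x -> ktr K x (next x) /\ R (next x)).
  { intros x Hx; exact (epsilon_spec (inhabits v) _ (Hsucc x Hx)). }
  assert (HR : forall n, R (Nat.iter n next v)).
  { induction n as [|n IHn].
    - exists (fun _ => v), 0; split; [reflexivity | split; [intros i Hi; lia | reflexivity]].
    - exact (proj2 (Hnext _ IHn)). }
  apply Hno_inf; exists (fun n => Nat.iter n next v); split; [reflexivity|].
  intros n; exact (proj1 (Hnext _ (HR n))).
Qed.

End Paths.

Section DeadlockExtension.

Variables (AP St : Type) (K : kripke AP St).

Lemma dext_no_deadlock x : ~ deadlock (dext K) x.
Proof.
  intros Hx; destruct x as [u|].
  - apply (Hx None); intros v Huv; exact (Hx (Some v) Huv).
  - exact (Hx None I).
Qed.

Lemma dext_path_stays_sdelta f k j i :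
  fin_path (dext K) f k -> f j = None -> j <= i <= k -> f i = None.
Proof.
  intros Hf Hj Hi; induction i as [|i IHi].
  - replace j with 0 in Hj by lia; exact Hj.
  - destruct (Nat.eq_dec j (S i)) as [<-|]; [exact Hj|].
    pose proof (Hf i ltac:(lia)) as Hstep; rewrite IHi in Hstep by lia.
    destruct (f (S i)); [contradiction | reflexivity].
Qed.

Definition unlift (s : St) (f : nat -> option St) (i : nat) : St :=
  match f i with Some x => x | None => s end.

Lemma unlift_eq s f i : f i <> None -> f i = Some (unlift s f i).
Proof. unfold unlift; destruct (f i); congruence. Qed.

Lemma dext_fin_path_unlift f s k :
  f 0 = Some s -> fin_path (dext K) f k -> (forall i, i <= k -> f i <> None) ->
  exists g, g 0 = s /\ fin_path K g k /\ forall i, i <= k -> f i = Some (g i).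
Proof.
  intros F0 Hf Hsome.
  assert (Hg : forall i, i <= k -> f i = Some (unlift s f i))
    by (intros i Hi; apply unlift_eq, Hsome, Hi).
  exists (unlift s f); split; [|split; [|exact Hg]].
  - unfold unlift; rewrite F0; reflexivity.
  - intros i Hi; pose proof (Hf i Hi) as Hstep.
    rewrite (Hg i), (Hg (S i)) in Hstep by lia; exact Hstep.
Qed.

Lemma dext_inf_path_unlift f s :
  f 0 = Some s -> inf_path (dext K) f -> (forall i, f i <> None) ->
  exists g, g 0 = s /\ inf_path K g /\ forall i, f i = Some (g i).
Proof.
  intros F0 Hf Hsome.
  assert (Hg : forall i, f i = Some (unlift s f i)) by (intros i; apply unlift_eq, Hsome).
  exists (unlift s f); split; [|split; [|exact Hg]].
  - unfold unlift; rewrite F0; reflexivity.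
  - intros i; pose proof (Hf i) as Hstep; rewrite (Hg i), (Hg (S i)) in Hstep; exact Hstep.
Qed.

Lemma first_none (f : nat -> option St) n :
  (forall i, i <= n -> f i <> None) \/
  exists j, j <= n /\ f j = None /\ forall i, i < j -> f i <> None.
Proof.
  induction n as [|n [Hsome | Hnone]].
  - destruct (f 0) eqn:F0; [left | right].
    + intros i Hi; replace i with 0 by lia; congruence.
    + exists 0; split; [lia | split; [exact F0 | intros i Hi; lia]].
  - destruct (f (S n)) eqn:Fn; [left | right].
    + intros i Hi; destruct (Nat.eq_dec i (S n)) as [->|]; [congruence | apply Hsome; lia].
    + exists (S n); split; [lia | split; [exact Fn | intros i Hi; apply Hsome; lia]].
  - right; destruct Hnone as (j & Hj & Hrest); exists j; split; [lia | exact Hrest].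
Qed.

Lemma dext_path_to_sdelta f s j :
  f 0 = Some s -> fin_path (dext K) f j -> f j = None -> (forall i, i < j -> f i <> None) ->
  exists g m, j = S m /\ g 0 = s /\ fin_path K g m /\ deadlock K (g m) /\
              forall i, i <= m -> f i = Some (g i).
Proof.
  intros F0 Hf Fj Hsome.
  destruct j as [|m]; [congruence|].
  destruct (dext_fin_path_unlift F0 (fin_path_le Hf (Nat.le_succ_diag_r m)))
    as (g & G0 & Hg & Hfg); [intros i Hi; apply Hsome; lia|].
  exists g, m; do 3 (split; [reflexivity || assumption|]); split; [|exact Hfg].
  pose proof (Hf m ltac:(lia)) as Hstep; rewrite Hfg, Fj in Hstep by lia; exact Hstep.
Qed.

Definition escape (g : nat -> St) (k i : nat) : option St :=
  if i <=? k then Some (g i) else None.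

Lemma escape_l g k i : i <= k -> escape g k i = Some (g i).
Proof. intros Hi; unfold escape; destruct (Nat.leb_spec i k); [reflexivity | lia]. Qed.

Lemma escape_r g k i : k < i -> escape g k i = None.
Proof. intros Hi; unfold escape; destruct (Nat.leb_spec i k); [lia | reflexivity]. Qed.

Lemma inf_path_escape g k :
  fin_path K g k -> deadlock K (g k) -> inf_path (dext K) (escape g k).
Proof.
  intros Hg Hdead i; destruct (Nat.lt_ge_cases i k).
  - rewrite !escape_l by lia; apply Hg; lia.
  - destruct (Nat.eq_dec i k) as [->|].
    + rewrite escape_l, escape_r by lia; exact Hdead.
    + rewrite !escape_r by lia; exact I.
Qed.

Lemma dext_EU_iff (P Q : option St -> Prop) s :
  (exists f k, f 0 = Some s /\ fin_path (dext K) f k /\ Q (f k) /\ forall i, i < k -> P (f i))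
  <->
  (exists g k, g 0 = s /\ fin_path K g k /\ Q (Some (g k)) /\ forall i, i < k -> P (Some (g i)))
  \/ (Q None /\ ex_max_fin_path K s (fun x => P (Some x))).
Proof.
  split.
  - intros (f & k & F0 & Hf & Hq & Hp).
    destruct (first_none f k) as [Hsome | (j & Hj & Fj & Hsome)].
    + left; destruct (dext_fin_path_unlift F0 Hf Hsome) as (g & G0 & Hg & Hfg).
      exists g, k; do 2 (split; [assumption|]).
      rewrite <- Hfg by lia; split; [exact Hq|].
      intros i Hi; rewrite <- Hfg by lia; apply Hp, Hi.
    + right; rewrite (dext_path_stays_sdelta Hf Fj (conj Hj (le_n k))) in Hq; split; [exact Hq|].
      destruct (dext_path_to_sdelta F0 (fin_path_le Hf Hj) Fj Hsome)
        as (g & m & -> & G0 & Hg & Hdead & Hfg).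
      exists g, m; do 3 (split; [assumption|]).
      intros i Hi; rewrite <- Hfg by lia; apply Hp; lia.
  - intros [(g & k & G0 & Hg & Hq & Hp) | (Hq & g & k & G0 & Hg & Hdead & Hp)].
    + exists (fun i => Some (g i)), k; split; [congruence | split; [exact Hg | auto]].
    + exists (escape g k), (S k).
      split; [rewrite escape_l by lia; congruence|].
      split; [apply inf_path_fin, inf_path_escape; assumption|].
      rewrite escape_r by lia; split; [exact Hq|].
      intros i Hi; rewrite escape_l by lia; apply Hp; lia.
Qed.

Lemma dext_EinfG_iff (P : option St -> Prop) s :
  (exists f, f 0 = Some s /\ inf_path (dext K) f /\ forall i, P (f i))
  <->
  (exists g, g 0 = s /\ inf_path K g /\ forall i, P (Some (g i)))
  \/ (P None /\ ex_max_fin_path K s (fun x => P (Some x))).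
Proof.
  split.
  - intros (f & F0 & Hf & Hp).
    destruct (classic (exists j, f j = None)) as [[j Fj] | Hsome].
    + destruct (first_none f j) as [Hsome | (j' & Hj' & Fj' & Hsome)];
        [exfalso; exact (Hsome j (le_n j) Fj)|].
      right; split; [rewrite <- Fj'; apply Hp|].
      destruct (dext_path_to_sdelta F0 (inf_path_fin Hf) Fj' Hsome)
        as (g & m & -> & G0 & Hg & Hdead & Hfg).
      exists g, m; do 3 (split; [assumption|]).
      intros i Hi; rewrite <- Hfg by lia; apply Hp.
    + left; destruct (dext_inf_path_unlift F0 Hf) as (g & G0 & Hg & Hfg);
        [intros i Fi; apply Hsome; exists i; exact Fi|].
      exists g; do 2 (split; [assumption|]); intros i; rewrite <- Hfg; apply Hp.
  - intros [(g & G0 & Hg & Hp) | (Hp0 & g & k & G0 & Hg & Hdead & Hp)].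
    + exists (fun i => Some (g i)); split; [congruence | split; [exact Hg | exact Hp]].
    + exists (escape g k); split; [rewrite escape_l by lia; congruence|].
      split; [apply inf_path_escape; assumption|].
      intros i; destruct (Nat.le_gt_cases i k).
      * rewrite escape_l by lia; apply Hp; lia.
      * rewrite escape_r by lia; exact Hp0.
Qed.

End DeadlockExtension.

Fixpoint sdelta_holds {AP} (phi : ctl_delta AP) : Prop :=
  match phi with
  | DAtom o => o = None
  | DNeg a => ~ sdelta_holds a
  | DAnd Phi => forall i, sdelta_holds (Phi i)
  | DEU _ b => sdelta_holds b
  | DEG a => sdelta_holds a
  end.

Section DextSemantics.

Variables (AP St : Type) (K : kripke AP St).

Lemma sat_sdelta phi : sat_delta (dext K) None phi <-> sdelta_holds phi.
Proof.
  induction phi as [[p|]|a IH|I Phi IH|a IHa b IHb|a IH]; simpl.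
  - split; [intros [] | discriminate].
  - tauto.
  - rewrite IH; tauto.
  - split; intros H i; apply IH, H.
  - rewrite <- IHb; split.
    + intros (f & k & F0 & Hf & Hb & _).
      rewrite (dext_path_stays_sdelta Hf F0 (conj (Nat.le_0_l k) (le_n k))) in Hb; exact Hb.
    + intros Hb; exists (fun _ => None), 0; repeat split; [exact Hb | intros i Hi; lia..].
  - rewrite <- IH; split.
    + intros [(f & F0 & _ & Ha) | (f & k & F0 & _ & _ & Ha)];
        rewrite <- F0; [apply Ha | apply Ha; lia].
    + intros Ha; left; exists (fun _ => None); repeat split; intros i; exact Ha.
Qed.

Lemma sat_DEU_dext s a b :
  sat_delta (dext K) (Some s) (DEU a b) <->
  (exists g k, g 0 = s /\ fin_path K g k /\ sat_delta (dext K) (Some (g k)) b /\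
     forall i, i < k -> sat_delta (dext K) (Some (g i)) a)
  \/ (sdelta_holds b /\ ex_max_fin_path K s (fun x => sat_delta (dext K) (Some x) a)).
Proof.
  rewrite <- sat_sdelta.
  exact (dext_EU_iff K (fun x => sat_delta (dext K) x a) (fun x => sat_delta (dext K) x b) s).
Qed.

Lemma sat_DEG_dext s a :
  sat_delta (dext K) (Some s) (DEG a) <->
  (exists g, g 0 = s /\ inf_path K g /\ forall i, sat_delta (dext K) (Some (g i)) a)
  \/ (sdelta_holds a /\ ex_max_fin_path K s (fun x => sat_delta (dext K) (Some x) a)).
Proof.
  rewrite <- sat_sdelta, <- (dext_EinfG_iff K (fun x => sat_delta (dext K) x a) s).
  simpl; split; [|tauto].
  intros [Hinf | (f & k & _ & _ & Hdead & _)]; [exact Hinf|].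
  exfalso; exact (dext_no_deadlock Hdead).
Qed.

End DextSemantics.

Definition DAnd2 {AP} (a b : ctl_delta AP) : ctl_delta AP :=
  DAnd (fun x : bool => if x then a else b).

Definition DAndNotDelta {AP} (a : ctl_delta AP) : ctl_delta AP := DAnd2 a (DNeg (DAtom None)).

Fixpoint ctl_inf_to_delta {AP} (phi : ctl_inf AP) : ctl_delta AP :=
  match phi with
  | IAtom p => DAtom (Some p)
  | INeg a => DNeg (ctl_inf_to_delta a)
  | IAnd Phi => DAnd (fun i => ctl_inf_to_delta (Phi i))
  | IEU a b => DEU (DAndNotDelta (ctl_inf_to_delta a)) (DAndNotDelta (ctl_inf_to_delta b))
  | IEinfG a => DEG (DAndNotDelta (ctl_inf_to_delta a))
  end.

Section InfToDelta.

Variables (AP St : Type) (K : kripke AP St).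

Lemma sat_DAndNotDelta s a :
  sat_delta (dext K) (Some s) (DAndNotDelta a) <-> sat_delta (dext K) (Some s) a.
Proof. simpl; split; [intros H; exact (H true) | intros Ha [|]; [exact Ha | intros []]]. Qed.

Lemma sdelta_holds_DAndNotDelta (a : ctl_delta AP) : ~ sdelta_holds (DAndNotDelta a).
Proof. simpl; intros H; apply (H false); reflexivity. Qed.

Lemma sat_ctl_inf_to_delta phi s :
  sat_inf K s phi <-> sat_delta (dext K) (Some s) (ctl_inf_to_delta phi).
Proof.
  revert s; induction phi as [p|a IH|I Phi IH|a IHa b IHb|a IH]; intros s.
  - reflexivity.
  - simpl; rewrite IH; reflexivity.
  - simpl; split; intros H i; apply IH, H.
  - simpl ctl_inf_to_delta; rewrite sat_DEU_dext; unfold ex_max_fin_path.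
    setoid_rewrite sat_DAndNotDelta; setoid_rewrite <- IHa; setoid_rewrite <- IHb.
    pose proof (sdelta_holds_DAndNotDelta (a := ctl_inf_to_delta b)); simpl; tauto.
  - simpl ctl_inf_to_delta; rewrite sat_DEG_dext; unfold ex_max_fin_path.
    setoid_rewrite sat_DAndNotDelta; setoid_rewrite <- IH.
    pose proof (sdelta_holds_DAndNotDelta (a := ctl_inf_to_delta a)); simpl; tauto.
Qed.

End InfToDelta.

Definition ITrue {AP} : ctl_inf AP := IAnd (fun x : False => match x with end).

Definition IProp {AP} (P : Prop) : ctl_inf AP := INeg (IAnd (fun _ : P => INeg ITrue)).

Definition IAnd2 {AP} (a b : ctl_inf AP) : ctl_inf AP :=
  IAnd (fun x : bool => if x then a else b).

Definition IOr {AP} (a b : ctl_inf AP) : ctl_inf AP := INeg (IAnd2 (INeg a) (INeg b)).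

(* E(c U (c /\ ~E(true U ~c) /\ ~E^inf G true)): every state reachable from the last one
   satisfies c and no path from it is infinite, so a deadlock is reachable along c-states. *)
Definition IEGmax {AP} (c : ctl_inf AP) : ctl_inf AP :=
  IEU c (IAnd2 c (IAnd2 (INeg (IEU ITrue (INeg c))) (INeg (IEinfG ITrue)))).

Fixpoint ctl_delta_to_inf {AP} (phi : ctl_delta AP) : ctl_inf AP :=
  match phi with
  | DAtom (Some p) => IAtom p
  | DAtom None => IProp False
  | DNeg a => INeg (ctl_delta_to_inf a)
  | DAnd Phi => IAnd (fun i => ctl_delta_to_inf (Phi i))
  | DEU a b =>
      IOr (IEU (ctl_delta_to_inf a) (ctl_delta_to_inf b))
          (IAnd2 (IProp (sdelta_holds b)) (IEGmax (ctl_delta_to_inf a)))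
  | DEG a =>
      IOr (IEinfG (ctl_delta_to_inf a))
          (IAnd2 (IProp (sdelta_holds a)) (IEGmax (ctl_delta_to_inf a)))
  end.

Section DeltaToInf.

Variables (AP St : Type) (K : kripke AP St).

Lemma sat_ITrue s : sat_inf K s ITrue.
Proof. intros []. Qed.

Lemma sat_IProp s P : sat_inf K s (IProp P) <-> P.
Proof.
  simpl; split.
  - intros H; apply NNPP; intros HnP; apply H; intros p; contradiction.
  - intros p H; exact (H p (sat_ITrue s)).
Qed.

Lemma sat_IAnd2 s a b : sat_inf K s (IAnd2 a b) <-> sat_inf K s a /\ sat_inf K s b.
Proof.
  simpl; split; [intros H; exact (conj (H true) (H false)) | intros [Ha Hb] [|]; assumption].
Qed.

Lemma sat_IOr s a b : sat_inf K s (IOr a b) <-> sat_inf K s a \/ sat_inf K s b.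
Proof.
  change (~ sat_inf K s (IAnd2 (INeg a) (INeg b)) <-> sat_inf K s a \/ sat_inf K s b).
  rewrite sat_IAnd2; simpl; tauto.
Qed.

Lemma sat_IEGmax s c : sat_inf K s (IEGmax c) <-> ex_max_fin_path K s (fun x => sat_inf K x c).
Proof.
  unfold IEGmax; simpl sat_inf at 1; setoid_rewrite sat_IAnd2; setoid_rewrite sat_IAnd2; split.
  - intros (f & k & F0 & Hf & (Hck & Hreach & Hinf) & Hc).
    assert (Hall : forall g m, g 0 = f k -> fin_path K g m -> sat_inf K (g m) c).
    { intros g m G0 Hg; apply NNPP; intros Hn; apply Hreach.
      exists g, m; repeat split; [assumption.. | intros i _; apply sat_ITrue]. }
    destruct (deadlock_path_of_no_inf_path (K := K) (v := f k)) as (g & m & G0 & Hg & Hdead).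
    { intros (g & G0 & Hg); apply Hinf.
      exists g; repeat split; [assumption.. | intros i; apply sat_ITrue]. }
    exists (path_app f k g), (k + m); split; [rewrite path_app_l by lia; exact F0|].
    split; [apply fin_path_app; auto|].
    rewrite path_app_r by (congruence || lia); replace (k + m - k) with m by lia.
    split; [exact Hdead|].
    intros i Hi; destruct (Nat.lt_ge_cases i k).
    + rewrite path_app_l by lia; apply Hc, H.
    + rewrite path_app_r by (congruence || lia); apply Hall; [exact G0|].
      apply (fin_path_le Hg); lia.
  - intros (f & k & F0 & Hf & Hdead & Hc).
    exists f, k; split; [exact F0|]; split; [exact Hf|].
    split; [|intros i Hi; apply Hc; lia].
    split; [apply Hc; lia|]; split.
    + intros (g & [|m] & G0 & Hg & Hn & _).
      * apply Hn; rewrite G0; apply Hc; lia.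
      * apply (Hdead (g 1)); rewrite <- G0; apply Hg; lia.
    + intros (g & G0 & Hg & _); apply (Hdead (g 1)); rewrite <- G0; apply Hg.
Qed.

Lemma sat_ctl_delta_to_inf phi s :
  sat_delta (dext K) (Some s) phi <-> sat_inf K s (ctl_delta_to_inf phi).
Proof.
  revert s; induction phi as [[p|]|a IH|I Phi IH|a IHa b IHb|a IH]; intros s.
  - reflexivity.
  - simpl ctl_delta_to_inf; rewrite sat_IProp; simpl; tauto.
  - simpl; rewrite IH; reflexivity.
  - simpl; split; intros H i; apply IH, H.
  - simpl ctl_delta_to_inf; rewrite sat_DEU_dext, sat_IOr, sat_IAnd2, sat_IProp, sat_IEGmax.
    unfold ex_max_fin_path; setoid_rewrite IHa; setoid_rewrite IHb; reflexivity.
  - simpl ctl_delta_to_inf; rewrite sat_DEG_dext, sat_IOr, sat_IAnd2, sat_IProp, sat_IEGmax.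
    unfold ex_max_fin_path; setoid_rewrite IH; reflexivity.
Qed.

End DeltaToInf.

Theorem theorem8p6 (AP : Type) :
  (forall phi : ctl_inf AP, exists phi' : ctl_delta AP,
     forall (S : Type) (K : kripke AP S) (s : S),
       sat_inf K s phi <-> sat_delta (dext K) (Some s) phi')
  /\
  (forall phi : ctl_delta AP, exists phi' : ctl_inf AP,
     forall (S : Type) (K : kripke AP S) (s : S),
       sat_delta (dext K) (Some s) phi <-> sat_inf K s phi').
Proof.
  split.
  - intros phi; exists (ctl_inf_to_delta phi); intros St K s; apply sat_ctl_inf_to_delta.
  - intros phi; exists (ctl_delta_to_inf phi); intros St K s; apply sat_ctl_delta_to_inf.
Qed.
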